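(* Let $p$ be an odd prime and $q$ an even power of $p$. Let $\chi$ be a non-trivial multiplicative character of $\mathbb{F}_q$ and $A \subseteq \mathbb{F}_q$ with $|A|=\sqrt{q}$. For $c\in\mathbb{F}_q^*$ let $S(q,A;c)=\sum_{a \in A} e_p\big(\operatorname{Tr}(ac)\big)$. Then $\chi(a-b)=1$ for all $a,b \in A$ with $a \neq b$ if and only if for every $c \in \mathbb{F}_q^*$ the complex numbers $\chi(c)|S(q,A;c)|^2$ and $G(\chi)$ share the same argument.
   Context: $\operatorname{Tr}$ is the absolute trace $\mathbb{F}_q \to \mathbb{F}_p$ and $e_p(x)=e^{2\pi i x/p}$ for $x\in\mathbb{F}_p$. Multiplicative characters are extended by $\chi(0)=0$. $G(\chi)=\sum_{c \in \mathbb{F}_q}\chi(c)e_p(\operatorname{Tr}(c))$. The number $0$ is regarded as sharing the argument of any complex number. *)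

From mathcomp Require Import all_boot all_order all_algebra all_field.
From mathcomp Require Import reals trigo.
From mathcomp Require Export complex.
Set Implicit Arguments. Unset Strict Implicit. Unset Printing Implicit Defensive.
Import GRing.Theory Num.Theory.
Local Open Scope ring_scope.

Section Defs.
Variable R : realType.
Variables (F : finFieldType) (p : nat).

(* absolute trace F_q -> F_p, q = p^n, n = logn p q; value in the prime
   subfield of F *)
Definition abs_trace (x : F) : F :=
  \sum_(i < logn p #|F|) x ^+ (p ^ i).

(* the additive character e_p(Tr x) = exp(2 pi i m / p), where m in
   {0,...,p-1} is the integer whose image in F is Tr x *)
Definition trace_int (x : F) : nat :=
  if [pick m : 'I_p | (m%:R : F) == abs_trace x] is Some m then val m else 0%N.

Definition ep_tr (x : F) : R[i] :=
  Complex (cos (2 * pi * (trace_int x)%:R / p%:R))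
          (sin (2 * pi * (trace_int x)%:R / p%:R)).

Definition mult_char (chi : F -> R[i]) : Prop :=
  [/\ chi 0 = 0, chi 1 = 1 & (forall x y, x != 0 -> y != 0 -> chi (x * y) = chi x * chi y)].

Definition nontrivial_char (chi : F -> R[i]) : Prop :=
  exists x : F, x != 0 /\ chi x != 1.

Definition gauss_sum (chi : F -> R[i]) : R[i] :=
  \sum_(c : F) chi c * ep_tr c.

Definition S_sum (A : {set F}) (c : F) : R[i] :=
  \sum_(a in A) ep_tr (a * c).
End Defs.

(* two complex numbers share the same argument; 0 shares the argument of
   every complex number *)
Definition same_arg (R : realType) (z w : R[i]) : Prop :=
  z = 0 \/ w = 0 \/ exists r : R, 0 < r /\ z = r%:C%C * w.

From mathcomp Require Import all_boot all_order all_algebra all_field.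
From mathcomp Require Import reals trigo complex.
From mathcomp Require Import ring zify.
Set Implicit Arguments. Unset Strict Implicit. Unset Printing Implicit Defensive.
Import Order.TTheory GRing.Theory Num.Theory.
Local Open Scope ring_scope.

(* Put z_c = chi(c) |S(c)|^2, G = G(chi) and T = sum of conj chi(a - b) over
   the N = |A|^2 - |A| pairs a <> b of A. Expanding |S(c)|^2 and twisting G by c
   gives sum_c z_c = G T, while Parseval and |A|^2 = q give
   sum_c |z_c| = |A| N = |G| N. If every chi(a - b) is 1 then T = N, so the
   triangle inequality |sum_c z_c| <= sum_c |z_c| is an equality and every z_c
   points in the direction of G. Conversely, if they all do, sum_c z_c = N G,
   hence T = N, and a sum of N complex numbers of modulus 1 equals N only if
   each of them is 1. The additive character x |-> e_p(Tr x) is zeta^m with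
   m the integer representing Tr x and zeta a primitive p-th root of unity; it
   is nontrivial because the trace is a nonzero polynomial of degree < q. *)

Lemma same_argE (R : realType) (z w : R[i]) :
  same_arg z w <-> z * `|w| = `|z| * w.
Proof.
rewrite /same_arg; split=> [[->|[->|[r [r_gt0 ->]]]]|zw].
- by rewrite normr0 !mul0r.
- by rewrite normr0 !mulr0.
- by rewrite normrM ger0_norm ?ler0c; [exact: mulrAC | exact: ltW].
have [->|z0] := eqVneq z 0; first by left.
have [->|w0] := eqVneq w 0; first by right; left.
right; right; have zw_real : `|z| / `|w| \is Num.real.
  by rewrite ger0_real // divr_ge0.
exists (complex.Re (`|z| / `|w|)); rewrite RRe_real //; split.
  by rewrite -ltcR RRe_real // divr_gt0 ?normr_gt0.
by rewrite mulrAC -zw mulfK ?normr_eq0.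
Qed.

Lemma sum_norm1_eq_card (C : numClosedFieldType) (I : finType) (P : {pred I})
    (u : I -> C) :
  (forall i, i \in P -> `|u i| = 1) -> \sum_(i in P) u i = #|P|%:R ->
  forall i, i \in P -> u i = 1.
Proof.
move=> norm_u sum_u i Pi.
have sum_norm_u : \sum_(i in P) `|u i| = #|P|%:R.
  by rewrite (eq_bigr _ norm_u) sumr_const.
have [t _ u_t] : {t : C | `|t| == 1 & forall i, i \in P -> u i = t}.
  by apply: normC_sum_eq1 => //; rewrite sum_u sum_norm_u normr_nat.
have P_neq0 : #|P|%:R != 0 :> C.
  by rewrite pnatr_eq0 -lt0n; apply/card_gt0P; exists i.
move: sum_u; rewrite (eq_bigr _ u_t) sumr_const -(mulr_natr t) u_t //.
by rewrite -[X in _ = X]mul1r; apply: mulIf.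
Qed.

Lemma scale_fixed_eq0 (R : idomainType) (a s : R) :
  a != 1 -> a * s = s -> s = 0.
Proof.
move=> a_neq1 /eqP; rewrite -subr_eq0 -{2}[s]mul1r -mulrBl mulf_eq0 subr_eq0.
by rewrite (negbTE a_neq1) => /eqP.
Qed.

Section OffDiagonal.
Variables (T : finType) (A : {set T}).

Definition offdiag : {set T * T} :=
  [set ab | [&& ab.1 \in A, ab.2 \in A & ab.1 != ab.2]].

Lemma card_offdiag : (#|offdiag| + #|A| = #|A| ^ 2)%N.
Proof.
rewrite -mulnn -cardsX -(cardsID [set ab | ab.1 == ab.2] (setX A A)) addnC.
congr (_ + _)%N; last first.
  by apply: eq_card => -[a b]; rewrite !inE /= [RHS]andbC -andbA.
have diag_inj : injective (fun a : T => (a, a)) by move=> a b [].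
rewrite -(card_imset _ diag_inj); apply: eq_card => -[a b]; rewrite !inE /=.
apply/imsetP/andP => [[c cA [-> ->]] | [/andP[aA _] /eqP <-]]; last by exists a.
by rewrite cA eqxx.
Qed.

Lemma card_offdiag_gt0 : (1 < #|A|)%N -> (0 < #|offdiag|)%N.
Proof. by move=> A_gt1; have := card_offdiag; nia. Qed.

Lemma big_offdiag (R : nmodType) (f : T -> T -> R) :
  (forall a, f a a = 0) ->
  \sum_(a in A) \sum_(b in A) f a b = \sum_(ab in offdiag) f ab.1 ab.2.
Proof.
move=> f_diag; rewrite pair_big_dep (bigID (fun ab => ab.1 == ab.2)) /=.
rewrite big1 ?add0r => [|ab /andP[_ /eqP ->] //].
by apply: eq_bigl => -[a b]; rewrite !inE andbA.
Qed.

End OffDiagonal.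

Section Characters.
Variables (C : numClosedFieldType) (F : finFieldType).

Variable psi : F -> C.
Hypotheses (psiD : {morph psi : x y / x + y >-> x * y})
  (norm_psi : forall x, `|psi x| = 1) (psi_nontrivial : exists c, psi c != 1).

Lemma psi0 : psi 0 = 1.
Proof.
have psi0_neq0 : psi 0 != 0 by rewrite -normr_eq0 norm_psi oner_eq0.
by apply: (mulfI psi0_neq0); rewrite -psiD addr0 mulr1.
Qed.

Lemma conj_psi x : (psi x)^* = psi (- x).
Proof.
have psi_neq0 : psi x != 0 by rewrite -normr_eq0 norm_psi oner_eq0.
by apply: (mulfI psi_neq0); rewrite -normCK norm_psi expr1n -psiD subrr psi0.
Qed.

Lemma sum_psi : \sum_c psi c = 0.
Proof.
have [c psic_neq1] := psi_nontrivial; apply: (scale_fixed_eq0 psic_neq1).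
rewrite mulr_sumr [RHS](reindex_inj (addrI c)).
by apply: eq_bigr => d _; rewrite psiD.
Qed.

Lemma sum_psiM x : \sum_c psi (x * c) = if x == 0 then #|F|%:R else 0.
Proof.
have [->|x_neq0] := eqVneq x 0.
  by under eq_bigr do rewrite mul0r psi0; rewrite sumr_const.
by rewrite -[RHS]sum_psi [RHS](reindex_inj (mulfI x_neq0)).
Qed.

Variable chi : F -> C.
Hypotheses (chi0 : chi 0 = 0) (chi1 : chi 1 = 1)
  (chiM_nz : forall x y, x != 0 -> y != 0 -> chi (x * y) = chi x * chi y)
  (chi_nontrivial : exists x, x != 0 /\ chi x != 1).

Lemma chiM x y : chi (x * y) = chi x * chi y.
Proof.
have [->|x_neq0] := eqVneq x 0; first by rewrite mul0r chi0 mul0r.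
have [->|y_neq0] := eqVneq y 0; first by rewrite mulr0 chi0 mulr0.
exact: chiM_nz.
Qed.

Lemma chiX x n : chi (x ^+ n) = chi x ^+ n.
Proof. by elim: n => [|n IHn]; rewrite ?chi1 // !exprS chiM IHn. Qed.

Lemma norm_chi x : x != 0 -> `|chi x| = 1.
Proof.
move=> x_neq0; have q_gt1 := finNzRing_gt1 F.
have q1_gt0 : (0 < #|F|.-1)%N by rewrite -ltnS prednK // ltnW.
have unit_order : x ^+ #|F|.-1 = 1.
  by apply: (mulIf x_neq0); rewrite mul1r -exprSr prednK ?expf_card // ltnW.
have /eqP : `|chi x| ^+ #|F|.-1 = 1.
  by rewrite -normrX -chiX unit_order chi1 normr1.
by rewrite pexpr_eq1 ?normr_ge0 // => /eqP.
Qed.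

Lemma conj_chi x : (chi x)^* = chi x^-1.
Proof.
have [->|x_neq0] := eqVneq x 0; first by rewrite invr0 chi0 conjC0.
have chi_neq0 : chi x != 0 by rewrite -normr_eq0 norm_chi ?oner_eq0.
apply: (mulfI chi_neq0).
by rewrite -normCK norm_chi // expr1n -chiM mulfV // chi1.
Qed.

Lemma sum_chi : \sum_c chi c = 0.
Proof.
have [x [x_neq0 chix_neq1]] := chi_nontrivial.
apply: (scale_fixed_eq0 chix_neq1); rewrite mulr_sumr.
rewrite [RHS](reindex_inj (mulfI x_neq0)).
by apply: eq_bigr => c _; rewrite chiM.
Qed.

Definition gauss := \sum_c chi c * psi c.

Lemma gauss_twist x : \sum_c chi c * psi (x * c) = (chi x)^* * gauss.
Proof.
have [->|x_neq0] := eqVneq x 0.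
  under eq_bigr do rewrite mul0r psi0 mulr1.
  by rewrite sum_chi chi0 conjC0 mul0r.
have xV_neq0 : x^-1 != 0 by rewrite invr_eq0.
rewrite (reindex_inj (mulfI xV_neq0)) /= mulr_sumr conj_chi.
by apply: eq_bigr => c _; rewrite mulVKf // chiM mulrA.
Qed.

Lemma normCK_gauss : `|gauss| ^+ 2 = #|F|%:R.
Proof.
have conj_gauss : gauss^* = \sum_x (chi x)^* * psi (- x).
  by rewrite rmorph_sum; apply: eq_bigr => x _; rewrite rmorphM /= conj_psi.
rewrite normCK conj_gauss mulr_sumr.
under eq_bigr do rewrite mulrCA mulrA -gauss_twist mulr_suml.
rewrite exchange_big /=.
transitivity (\sum_c chi c * \sum_x psi ((c - 1) * x)).
  apply: eq_bigr => c _; rewrite mulr_sumr; apply: eq_bigr => x _.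
  by rewrite -mulrA -psiD mulrBl mul1r [x * c]mulrC.
rewrite (bigD1 1) //= subrr sum_psiM eqxx chi1 mul1r big1 ?addr0 // => c c_neq1.
by rewrite sum_psiM subr_eq0 (negbTE c_neq1) mulr0.
Qed.

Section SubsetSum.
Variable A : {set F}.

Definition exp_sum c := \sum_(a in A) psi (a * c).

Lemma exp_sum0 : exp_sum 0 = #|A|%:R.
Proof.
by rewrite /exp_sum; under eq_bigr do rewrite mulr0 psi0; rewrite sumr_const.
Qed.

Lemma normCK_exp_sum c :
  `|exp_sum c| ^+ 2 = \sum_(a in A) \sum_(b in A) psi ((a - b) * c).
Proof.
rewrite normCK rmorph_sum mulr_suml; apply: eq_bigr => a _.
by rewrite mulr_sumr; apply: eq_bigr => b _; rewrite /= conj_psi -psiD mulrBl.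
Qed.

Lemma sum_chi_normCK_exp_sum :
  \sum_c chi c * `|exp_sum c| ^+ 2 =
  gauss * \sum_(ab in offdiag A) (chi (ab.1 - ab.2))^*.
Proof.
rewrite -(@big_offdiag _ A _ (fun a b => (chi (a - b))^*)) => [|a]; last first.
  by rewrite subrr chi0 conjC0.
under eq_bigr do rewrite normCK_exp_sum mulr_sumr.
rewrite exchange_big mulr_sumr; apply: eq_bigr => a _.
under eq_bigr do rewrite mulr_sumr.
rewrite exchange_big mulr_sumr.
by apply: eq_bigr => b _; rewrite gauss_twist mulrC.
Qed.

Lemma sum_normCK_exp_sum : \sum_c `|exp_sum c| ^+ 2 = #|F|%:R * #|A|%:R.
Proof.
under eq_bigr do rewrite normCK_exp_sum.
rewrite exchange_big /= mulr_natr -sumr_const; apply: eq_bigr => a aA.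
rewrite exchange_big /=; under eq_bigr do rewrite sum_psiM subr_eq0.
rewrite (bigD1 a) //= eqxx big1 ?addr0 // => b /andP[_ b_neq_a].
by rewrite eq_sym (negbTE b_neq_a).
Qed.

Hypothesis card_A : (#|A| ^ 2)%N = #|F|.

Lemma card_A_gt1 : (1 < #|A|)%N.
Proof. by rewrite -(ltn_exp2r _ _ (ltn0Sn 1)) exp1n card_A finNzRing_gt1. Qed.

Lemma norm_gauss : `|gauss| = #|A|%:R.
Proof.
apply/eqP; rewrite -(eqrXn2 (ltn0Sn 1)) ?normr_ge0 ?ler0n //.
by rewrite normCK_gauss -natrX card_A.
Qed.

Local Notation z c := (chi c%R * `|exp_sum c| ^+ 2).

Lemma sum_norm_chi_exp_sum : \sum_c `|z c| = #|A|%:R * #|offdiag A|%:R.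
Proof.
have card_offdiagC : #|offdiag A|%:R = #|A|%:R ^+ 2 - #|A|%:R :> C.
  by rewrite -natrX -card_offdiag natrD addrK.
have parseval := sum_normCK_exp_sum.
rewrite (bigD1 0) //= exp_sum0 normr_nat in parseval.
rewrite (bigD1 0) //= chi0 mul0r normr0 add0r.
under eq_bigr => c c_neq0 do rewrite normrM norm_chi // mul1r normrX normr_id.
apply: (addrI (#|A|%:R ^+ 2)).
by rewrite parseval -card_A natrX card_offdiagC; ring.
Qed.

Lemma aligned_of_offdiag_chi1 :
  (forall a b, a \in A -> b \in A -> a != b -> chi (a - b) = 1) ->
  forall c, z c * `|gauss| = `|z c| * gauss.
Proof.
move=> chi_offdiag.
have offdiag_sum :
    \sum_(ab in offdiag A) (chi (ab.1 - ab.2))^* = #|offdiag A|%:R.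
  rewrite -sumr_const; apply: eq_bigr => -[a b]; rewrite inE /=.
  by case/and3P=> aA bA ab; rewrite chi_offdiag ?conjC1.
have sum_z : \sum_c z c = gauss * #|offdiag A|%:R.
  by rewrite sum_chi_normCK_exp_sum offdiag_sum.
have offdiag_neq0 : #|offdiag A|%:R != 0 :> C.
  by rewrite pnatr_eq0 -lt0n card_offdiag_gt0 // card_A_gt1.
have [t _ z_t] : {t : C | `|t| == 1 & forall c, true -> z c = `|z c| * t}.
  apply: normC_sum_eq.
  by rewrite sum_z sum_norm_chi_exp_sum normrM norm_gauss normr_nat mulrC.
have gauss_t : gauss = #|A|%:R * t.
  apply: (mulIf offdiag_neq0).
  rewrite -sum_z (eq_bigr _ (fun c _ => z_t c isT)).
  by rewrite -mulr_suml sum_norm_chi_exp_sum mulrAC.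
move=> c; rewrite {1}z_t // norm_gauss gauss_t.
by rewrite -mulrA [t * _]mulrC.
Qed.

Lemma offdiag_chi1_of_aligned :
  (forall c, c != 0 -> z c * `|gauss| = `|z c| * gauss) ->
  forall a b, a \in A -> b \in A -> a != b -> chi (a - b) = 1.
Proof.
move=> aligned.
have aligned_all c : z c * `|gauss| = `|z c| * gauss.
  have [->|/aligned //] := eqVneq c 0.
  by rewrite chi0 !mul0r normr0 mul0r.
have A_neq0 : #|A|%:R != 0 :> C by rewrite pnatr_eq0 -lt0n ltnW ?card_A_gt1.
have gauss_neq0 : gauss != 0 by rewrite -normr_eq0 norm_gauss.
have sum_z : \sum_c z c = gauss * #|offdiag A|%:R.
  apply: (mulIf A_neq0); rewrite -[in LHS]norm_gauss mulr_suml.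
  rewrite (eq_bigr _ (fun c _ => aligned_all c)) -mulr_suml.
  by rewrite sum_norm_chi_exp_sum; ring.
have offdiag_sum :
    \sum_(ab in offdiag A) (chi (ab.1 - ab.2))^* = #|offdiag A|%:R.
  by apply: (mulfI gauss_neq0); rewrite -sum_chi_normCK_exp_sum sum_z.
move=> a b aA bA a_neq_b.
have norm_offdiag ab : ab \in offdiag A -> `|(chi (ab.1 - ab.2))^*| = 1.
  by rewrite inE => /and3P[_ _ ab_neq]; rewrite norm_conjC norm_chi // subr_eq0.
have := sum_norm1_eq_card norm_offdiag offdiag_sum (i := (a, b)).
rewrite inE /= aA bA a_neq_b => /(_ isT) chi_ab.
by rewrite -[chi _]conjCK chi_ab conjC1.
Qed.

Theorem offdiag_chi1_iff_aligned :
  (forall a b, a \in A -> b \in A -> a != b -> chi (a - b) = 1) <->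
  (forall c, c != 0 -> z c * `|gauss| = `|z c| * gauss).
Proof.
split=> [chi_offdiag c _ | ]; first exact: aligned_of_offdiag_chi1.
exact: offdiag_chi1_of_aligned.
Qed.

End SubsetSum.
End Characters.

Section AbsoluteTrace.
Variables (F : finFieldType) (p : nat).
Hypothesis pcharFp : p \in [pchar F].

Local Notation Tr := (@abs_trace F p).
Local Notation n := (logn p #|F|).

Let p_prime : prime p. Proof. exact: pcharf_prime pcharFp. Qed.

Lemma card_pchar : #|F| = (p ^ n)%N.
Proof. exact: card_pprimeChar pcharFp. Qed.

Lemma logn_card_gt0 : (0 < n)%N.
Proof.
rewrite lt0n; apply: contraTneq (finNzRing_gt1 F) => n0.
by rewrite card_pchar n0.
Qed.

Lemma abs_traceD x y : Tr (x + y) = Tr x + Tr y.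
Proof.
rewrite /abs_trace -big_split; apply: eq_bigr => i _; apply: exprDn_pchar.
by rewrite (eq_pnat _ (pcharf_eq pcharFp)) pnatX pnat_id.
Qed.

Lemma abs_trace_frobenius x : Tr x ^+ p = Tr x.
Proof.
have x_pn : x ^+ (p ^ n) = x ^+ (p ^ 0) by rewrite -card_pchar expf_card expn0.
have : \sum_(i < n.+1) x ^+ (p ^ i) =
        x ^+ (p ^ 0) + \sum_(i < n) x ^+ (p ^ i.+1).
  exact: big_ord_recl.
rewrite big_ord_recr /= x_pn addrC => /addrI shift.
rewrite /abs_trace -(pFrobenius_autE pcharFp) rmorph_sum /= [RHS]shift.
by apply: eq_bigr => i _; rewrite pFrobenius_autE -exprM -expnSr.
Qed.

Lemma natf_eq_mod m m' : ((m%:R : F) == m'%:R) = (m == m' %[mod p]).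
Proof.
wlog le_m'm : m m' / (m' <= m)%N.
  by move=> W; case: (leqP m' m) => [/W // | /ltnW /W]; rewrite eq_sym => ->.
by rewrite eqn_mod_dvd // (dvdn_pcharf pcharFp) natrB // subr_eq0.
Qed.

Lemma frobenius_fixed_natr (t : F) : t ^+ p = t -> exists m : 'I_p, t = m%:R.
Proof.
move=> t_fixed; have [m /eqP ->|no_m] := pickP (fun m : 'I_p => t == m%:R).
  by exists m.
pose P : {poly F} := 'X^p - 'X.
have size_P : size P = p.+1.
  by rewrite size_polyDl ?size_polyXn // size_polyN size_polyX ltnS prime_gt1.
have P_neq0 : P != 0 by rewrite -size_poly_eq0 size_P.
suff : (size (t :: [seq (val m)%:R | m <- enum 'I_p]) < size P)%N.
  by rewrite size_P /= size_map size_enum_ord ltnn.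
apply: max_poly_roots P_neq0 _ _.
  rewrite /= rootE !hornerE t_fixed subrr eqxx /=.
  apply/allP => _ /mapP[m _ ->].
  by rewrite rootE !hornerE -(pFrobenius_autE pcharFp) pFrobenius_aut_nat subrr.
rewrite /= map_inj_uniq ?enum_uniq ?andbT => [|m m' /eqP].
  by apply/mapP => -[m _ t_m]; move: (no_m m); rewrite t_m eqxx.
by rewrite natf_eq_mod !modn_small // => /eqP /val_inj.
Qed.

Lemma natr_trace_int (x : F) : (trace_int p x)%:R = Tr x.
Proof.
rewrite /trace_int; case: pickP => [m /eqP // | no_m].
have [m Tr_m] := frobenius_fixed_natr (abs_trace_frobenius x).
by move: (no_m m); rewrite Tr_m eqxx.
Qed.

Definition trace_poly : {poly F} := \sum_(i < n) 'X^(p ^ i).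

Lemma horner_trace_poly (x : F) : trace_poly.[x] = Tr x.
Proof. by rewrite horner_sum; apply: eq_bigr => i _; rewrite hornerXn. Qed.

Lemma trace_poly_neq0 : trace_poly != 0.
Proof.
apply/eqP => /(congr1 (fun P : {poly F} => P`_1)) /eqP.
rewrite coef_sum coef0 (bigD1 (Ordinal logn_card_gt0)) //= coefXn expn0 eqxx.
rewrite big1 ?addr0 ?oner_eq0 // => i.
rewrite -val_eqE coefXn -{1}(expn0 p) eqn_exp2l ?prime_gt1 //.
by rewrite eq_sym => /negbTE ->.
Qed.

Lemma size_trace_poly : (size trace_poly <= #|F|)%N.
Proof.
apply: leq_trans (size_sum _ _ _) _; rewrite [X in (_ <= X)%N]card_pchar.
by apply/bigmax_leqP => i _; rewrite size_polyXn ltn_exp2l ?prime_gt1.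
Qed.

Lemma abs_trace_nontrivial : exists x : F, Tr x != 0.
Proof.
have [x Tr_x | Tr0] := pickP (fun x => Tr x != 0); first by exists x.
suff : (size (enum F) < size trace_poly)%N.
  by rewrite -cardE ltnNge size_trace_poly.
apply: max_poly_roots trace_poly_neq0 _ (enum_uniq F); apply/allP => x _.
by rewrite rootE horner_trace_poly -[_ == 0]negbK Tr0.
Qed.

End AbsoluteTrace.

Section UnitCircle.
Variable R : realType.

Definition expi (t : R) : R[i] := Complex (cos t) (sin t).

Lemma expiD s t : expi (s + t) = expi s * expi t.
Proof.
by rewrite /expi cosD sinD; apply/eqP; rewrite eq_complex /= eqxx addrC eqxx.
Qed.

Lemma expiMn t m : expi (t *+ m) = expi t ^+ m.
Proof.
elim: m => [|m IHm]; first by rewrite /expi cos0 sin0.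
by rewrite mulrS expiD IHm exprS.
Qed.

Lemma norm_expi t : `|expi t| = 1.
Proof. by rewrite normc_def /= cos2Dsin2 sqrtr1. Qed.

Variable p : nat.
Hypotheses (p_prime : prime p) (p_odd : odd p).

Definition zeta := expi (2 * pi / p%:R).

Lemma zeta_expp : zeta ^+ p = 1.
Proof.
rewrite /zeta -expiMn -(mulr_natr (2 * pi / p%:R)) divfK; last first.
  by rewrite pnatr_eq0 -lt0n prime_gt0.
by rewrite mulr_natl /expi cos2pi sin2pi.
Qed.

Lemma zeta_neq1 : zeta != 1.
Proof.
have p_gt2 : (2 < p)%N.
  by move: (prime_gt1 p_prime) p_odd; rewrite leq_eqVlt => /orP[/eqP <- | ].
apply/eqP => /(congr1 (@complex.Im R)) /= sin0.
suff : 0 < sin (2 * pi / p%:R :> R) by rewrite sin0 ltxx.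
apply: sin_gt0_pi; rewrite divr_gt0 ?mulr_gt0 ?pi_gt0 ?ltr0n ?prime_gt0 //=.
by rewrite ltr_pdivrMr ?ltr0n ?prime_gt0 // mulrC ltr_pM2l ?pi_gt0 // ltr_nat.
Qed.

Lemma prim_zeta : p.-primitive_root zeta.
Proof.
have [d prim_d d_dvd_p] := prim_order_exists (prime_gt0 p_prime) zeta_expp.
have [_ /(_ d d_dvd_p) /orP[/eqP d1 | /eqP <- //]] := primeP p_prime.
move: (prim_expr_order prim_d); rewrite d1 expr1 => /eqP.
by rewrite (negbTE zeta_neq1).
Qed.

End UnitCircle.

Section AdditiveCharacter.
Variables (R : realType) (F : finFieldType) (p : nat).
Hypotheses (pcharFp : p \in [pchar F]) (p_odd : odd p).

Lemma ep_trE (x : F) : ep_tr R p x = zeta R p ^+ trace_int p x.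
Proof. by rewrite /zeta -expiMn -(mulr_natr (2 * pi / p%:R)) mulrAC. Qed.

Lemma ep_trD : {morph @ep_tr R F p : x y / x + y >-> x * y}.
Proof.
move=> x y; rewrite !ep_trE -exprD.
rewrite -(expr_mod _ (zeta_expp R (pcharf_prime pcharFp))).
rewrite -[RHS](expr_mod _ (zeta_expp R (pcharf_prime pcharFp))).
congr (_ ^+ _); apply/eqP.
by rewrite -(natf_eq_mod pcharFp) natrD !natr_trace_int // abs_traceD.
Qed.

Lemma norm_ep_tr (x : F) : `|ep_tr R p x| = 1.
Proof. exact: norm_expi. Qed.

Lemma ep_tr_nontrivial : exists c : F, ep_tr R p c != 1.
Proof.
have [c Tr_c] := abs_trace_nontrivial pcharFp; exists c.
rewrite ep_trE -(prim_order_dvd (prim_zeta R (pcharf_prime pcharFp) p_odd)).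
by rewrite (dvdn_pcharf pcharFp) natr_trace_int.
Qed.

End AdditiveCharacter.

Theorem proposition3p2 (R : realType) (F : finFieldType) (p k : nat)
  (hp : prime p) (hodd : odd p) (hchar : p \in [pchar F])
  (hk : (0 < k)%N) (hq : #|F| = (p ^ (2 * k))%N)
  (chi : F -> R[i]) (hchi : mult_char chi) (hnt : nontrivial_char chi)
  (A : {set F}) (hA : (#|A| ^ 2)%N = #|F|) :
  (forall a b, a \in A -> b \in A -> a != b -> chi (a - b) = 1) <->
  (forall c : F, c != 0 ->
     same_arg (chi c * `|S_sum R p A c| ^+ 2) (gauss_sum p chi)).
Proof.
case: hchi => chi0 chi1 chiM.
apply: (iff_trans (offdiag_chi1_iff_aligned (ep_trD R hchar) (@norm_ep_tr R F p)
  (ep_tr_nontrivial R hchar hodd) chi0 chi1 chiM hnt hA)).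
by split=> aligned c /aligned /same_argE.
Qed.
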